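(* Let $T$ be a finite set of students and $S$ a finite set of schools, school $s$ having capacity $q_s$. Each student $t$ submits an ordered list $\mathcal{L}_t=(s_t^1,\dots,s_t^{L_t})$ of distinct schools. For each school $s$, let $\mathcal{L}_s=\{t: s\in\mathcal{L}_t\}$ be its applicants; $s$ partitions $\mathcal{L}_s$ into acceptable and unacceptable applicants and strictly ranks the acceptable ones by a priority order $pr_s$. Let $\mu$ be the outcome of the student-proposing deferred acceptance algorithm run on these submitted lists and priorities (so each matched student $t$ has $\mu(t)\in\mathcal{L}_t$ and is acceptable to $\mu(t)$, and unacceptable applicants are never admitted). Suppose $\mu$ is non-wasteful: either $|\mu(s)|=q_s$ for every school $s$, or no student is unmatched. Then there exist a strict preference order $\succ_t$ over all of $S$ for each student $t$ and a strict priority order $\rhd_s$ over all of $T$ for each school $s$ such that (1) they are consistent with the submitted data: for each $t$, if $s,s'\in\mathcal{L}_t$ and $s$ appears before $s'$ in $\mathcal{L}_t$ then $s\succ_t s'$; for each $s$, if $t,t'$ are acceptable applicants of $s$ with $t$ ranked above $t'$ by $pr_s$ then $t\rhd_s t'$, and every acceptable applicant of $s$ is ranked by $\rhd_s$ above every unacceptable applicant of $s$; and (2) $\mu$ is stable under $(\succ,\rhd)$.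
   Context: A matching $\mu$ assigns each student $t$ either a school $\mu(t)\in S$ or leaves $t$ unmatched ($\mu(t)=t$), with $\mu(s)=\{t:\mu(t)=s\}$ and $|\mu(s)|\le q_s$. Under complete preferences, every student prefers any school to being unmatched. A matching $\mu$ is stable under $(\succ,\rhd)$ if there is no pair $(t,s)$ of a student and a school with either (i) $\mu(t)=t$ and $|\mu(s)|<q_s$, or (ii) $s\succ_t\mu(t)$ and $t\rhd_s t'$ for some $t'\in\mu(s)$. *)

From mathcomp Require Import all_boot.
Set Implicit Arguments. Unset Strict Implicit. Unset Printing Implicit Defensive.

(* Data conventions:
   - L t : seq S   = submitted ordered list of student t (first = most preferred);
   - P s : seq T   = the acceptable applicants of school s, listed in decreasing
                     priority pr_s (first = highest priority).  The applicants of s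
                     are [set t | s \in L t]; those not in P s are unacceptable.
   - q s : nat     = capacity of school s.
   - a matching is mu : T -> option S (None = unmatched). *)

Section DA.
Variables (T S : finType) (q : S -> nat) (L : T -> seq S) (P : S -> seq T).

(* ptr t = number of schools of L t that have rejected t so far;
   t currently applies to the (ptr t)-th school of L t, if any. *)
Definition applying (ptr : T -> nat) (s : S) (t : T) : bool :=
  onth (L t) (ptr t) == Some s.

Definition held (ptr : T -> nat) (s : S) (t : T) : bool :=
  [&& applying ptr s t, t \in P s &
      #|[set t' | [&& applying ptr s t', t' \in P s &
                      index t' (P s) < index t (P s)]]| < q s].

Definition da_step (ptr : T -> nat) : T -> nat :=
  fun t => if (ptr t < size (L t)) && [forall s, ~~ held ptr s t]
           then (ptr t).+1 else ptr t.

(* enough rounds for the procedure to terminate (each non-final round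
   increases \sum_t ptr t, which is bounded by \sum_t size (L t)) *)
Definition da_ptr : T -> nat :=
  iter (\sum_t size (L t)).+1 da_step (fun _ => 0).

Definition DA (t : T) : option S := [pick s | held da_ptr s t].

End DA.

Definition strict_total_order (X : finType) (r : rel X) : Prop :=
  [/\ irreflexive r, transitive r & forall x y, x != y -> r x y || r y x].

Definition prefers_to (S : finType) (r : rel S) (s : S) (o : option S) : bool :=
  if o is Some s' then r s s' else true.

Definition assigned (T S : finType) (mu : T -> option S) (s : S) : {set T} :=
  [set t | mu t == Some s].

Definition stable (T S : finType) (q : S -> nat)
    (pref : T -> rel S) (prio : S -> rel T) (mu : T -> option S) : Prop :=
  forall (t : T) (s : S),
    ~ (mu t = None /\ #|assigned mu s| < q s) /\
    ~ (prefers_to (pref t) s (mu t) /\ exists2 t', t' \in assigned mu s & prio s t t').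

Definition non_wasteful (T S : finType) (q : S -> nat) (mu : T -> option S) : Prop :=
  (forall s, #|assigned mu s| = q s) \/ (forall t, mu t <> None).

(* Complete every submitted list and every priority list by ranking all
   unlisted schools (resp. students) last, ties broken by an arbitrary
   enumeration.  Non-wastefulness excludes blocking pairs of an unmatched student
   and a school with a free seat.  If t prefers s to its assignment, then t
   applied to s and was rejected, and t is acceptable to s (unacceptable students
   rank below everybody admitted at s).  From the round in which s rejects t on,
   s always has at least q s acceptable applicants ranked above t: the best q s
   of them are held, hence never rejected, and keep applying to s.  So every
   student finally admitted at s outranks t. *)
From Stdlib Require Import FunctionalExtensionality.
From Pilot Require Import Defs.
From mathcomp Require Import all_boot.
From mathcomp Require Import zify.
Set Implicit Arguments. Unset Strict Implicit. Unset Printing Implicit Defensive.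

Lemma index_onth (X : eqType) (s : seq X) n x :
  onth s n = Some x -> x \in s /\ index x s <= n.
Proof.
move=> sn; have ltn_size : n < size s by rewrite -onthTE sn.
have <- := onth_nth x _ _ _ sn.
by rewrite mem_nth // index_nth.
Qed.

Lemma onth_index (X : eqType) (s : seq X) x : x \in s -> onth s (index x s) = Some x.
Proof. by move=> xs; rewrite onthE (nth_map x) ?index_mem ?nth_index. Qed.

Lemma lower_set_of_card (X : finType) (A : {set X}) (key : X -> nat) n :
  n <= #|A| -> exists C : {set X},
    [/\ C \subset A, #|C| = n &
        forall x y, x \in C -> y \in A -> key y < key x -> y \in C].
Proof.
elim: n => [|n IH] ltn_card.
  by exists set0; split; rewrite ?sub0set ?cards0 // => x y; rewrite inE.
have [C [CA cardC lowC]] := IH (ltnW ltn_card).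
have [x0 x0AC] : exists x0, x0 \in A :\: C.
  apply/set0Pn; rewrite -card_gt0 cardsD (setIidPr CA) cardC; lia.
case: (arg_minnP key x0AC) => x xAC xmin.
have [xA xNC] := setDP xAC.
exists (x |: C); split.
- by rewrite subUset sub1set xA CA.
- by rewrite cardsU1 xNC cardC.
move=> z y; rewrite in_setU1 => /predU1P[-> | zC] yA ltyz;
  rewrite in_setU1; apply/predU1P; right.
  by apply: contraTT ltyz => yNC; rewrite -leqNgt xmin //; apply/setDP.
exact: lowC ltyz.
Qed.

Lemma iter_inflationary_fixed (X : finType) (f : (X -> nat) -> X -> nat) (b : X -> nat) :
  (forall p x, p x <= f p x) -> (forall k x, iter k f (fun _ => 0) x <= b x) ->
  f (iter (\sum_x b x).+1 f (fun _ => 0)) = iter (\sum_x b x).+1 f (fun _ => 0).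
Proof.
move=> f_ge iter_le.
have fixed_or_large k : let p := iter k f (fun _ => 0) in f p = p \/ k <= \sum_x p x.
  elim: k => [|k IH] /=; first by right.
  set p := iter k f _ in IH *.
  case: IH => [fp | le_k_sum]; first by left; rewrite fp fp.
  case: (boolP [forall x, f p x == p x]) => [/forallP fp | /forallPn[x0 fpx0]].
    have {}fp : f p = p by apply: functional_extensionality => x; apply/eqP.
    by left; rewrite fp fp.
  right; apply: leq_ltn_trans le_k_sum _.
  rewrite (bigD1 x0) //= [ltnRHS](bigD1 x0) //= -addSn leq_add //.
    by rewrite ltn_neqAle eq_sym fpx0 f_ge.
  by apply: leq_sum => x _; apply: f_ge.
case: (fixed_or_large (\sum_x b x).+1) => // large.
have : \sum_x iter (\sum_x b x).+1 f (fun _ => 0) x <= \sum_x b x.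
  by apply: leq_sum => x _; apply: iter_le.
lia.
Qed.

Definition lt_by (X : finType) (key : X -> nat) : rel X :=
  fun x y => (key x < key y) || ((key x == key y) && (enum_rank x < enum_rank y)).

Lemma lt_by_strict_total (X : finType) (key : X -> nat) : strict_total_order (lt_by key).
Proof.
split.
- by move=> x; rewrite /lt_by ltnn eqxx ltnn.
- move=> y x z; rewrite /lt_by => /orP[h1|/andP[/eqP h1 h2]] /orP[h3|/andP[/eqP h3 h4]];
  apply/orP; by [left; lia | right; apply/andP; split; [apply/eqP|]; lia].
- move=> x y neq_xy; rewrite /lt_by.
  case: ltngtP => //= _; case: ltngtP => // /ord_inj/enum_rank_inj eq_xy.
  by rewrite eq_xy eqxx in neq_xy.
Qed.

Lemma lt_by_key (X : finType) (key : X -> nat) x y : key x < key y -> lt_by key x y.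
Proof. by rewrite /lt_by => ->. Qed.

Lemma lt_by_key_le (X : finType) (key : X -> nat) x y : lt_by key x y -> key x <= key y.
Proof. by rewrite /lt_by => /orP[/ltnW | /andP[/eqP -> _]]. Qed.

Section DeferredAcceptance.
Variables (T S : finType) (q : S -> nat) (L : T -> seq S) (P : S -> seq T).

Local Notation applying := (applying L).
Local Notation held := (held q L P).
Local Notation da_step := (da_step q L P).
Local Notation da_ptr := (da_ptr q L P).
Local Notation DA := (DA q L P).

Definition outranking ptr s t : {set T} :=
  [set t' | [&& applying ptr s t', t' \in P s & index t' (P s) < index t (P s)]].

Lemma heldE ptr s t :
  held ptr s t = [&& applying ptr s t, t \in P s & #|outranking ptr s t| < q s].
Proof. by []. Qed.

Lemma da_step_ge ptr t : ptr t <= da_step ptr t.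
Proof. by rewrite /da_step; case: ifP. Qed.

Lemma da_step_le ptr t : da_step ptr t <= (ptr t).+1.
Proof. by rewrite /da_step; case: ifP. Qed.

Lemma held_applying_step ptr s t : held ptr s t -> applying (da_step ptr) s t.
Proof.
move=> held_t; rewrite /Defs.applying /Defs.da_step.
have -> : [forall s', ~~ held ptr s' t] = false.
  by apply/negbTE/forallPn; exists s; rewrite negbK.
by rewrite andbF; case/andP: held_t.
Qed.

Lemma outranking_step ptr s t :
  q s <= #|outranking ptr s t| -> q s <= #|outranking (da_step ptr) s t|.
Proof.
move=> /(lower_set_of_card (index^~ (P s)))[C [C_sub card_C C_low]].
rewrite -card_C; apply/subset_leq_card/subsetP => x xC.
have := subsetP C_sub x xC; rewrite inE => /and3P[x_app xP ltxt].
rewrite inE xP ltxt !andbT; apply: held_applying_step.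
rewrite heldE x_app xP -card_C /=.
apply/proper_card/properP; split; last by exists x; rewrite // inE ltnn !andbF.
apply/subsetP => y; rewrite inE => /and3P[y_app yP ltyx].
have ltyt := ltn_trans ltyx ltxt.
by apply: C_low ltyx; rewrite // inE y_app yP ltyt.
Qed.

Lemma rejected_step ptr s t : t \in P s -> index s (L t) = ptr t ->
  ptr t < da_step ptr t -> q s <= #|outranking ptr s t|.
Proof.
rewrite /da_step => tP ind_s; case: ifP => [/andP[lt_size /forallP not_held] _ | _];
  last by rewrite ltnn.
have t_app : applying ptr s t.
  by rewrite /Defs.applying -ind_s onth_index // -index_mem ind_s.
by have := not_held s; rewrite heldE t_app tP /= -leqNgt.
Qed.

Definition da_iter k := iter k da_step (fun _ => 0).

Lemma da_iter_le_size k t : da_iter k t <= size (L t).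
Proof. by elim: k => //= k IH; rewrite /da_step; case: ifP => // /andP[]. Qed.

Lemma rejected_outranked k s t : t \in P s -> index s (L t) < da_iter k t ->
  q s <= #|outranking (da_iter k) s t|.
Proof.
move=> tP; elim: k => // k IH.
rewrite /da_iter iterS -/(da_iter k) => lt_ind; apply: outranking_step.
case: (ltnP (index s (L t)) (da_iter k t)) => [/IH // | ge_ind].
have le_step := da_step_le (da_iter k) t.
by apply: rejected_step => //; lia.
Qed.

Lemma da_ptr_fixed : da_step da_ptr = da_ptr.
Proof. exact: iter_inflationary_fixed da_step_ge da_iter_le_size. Qed.

Lemma DA_held t s : DA t = Some s -> held da_ptr s t.
Proof. by rewrite /DA; case: pickP => // s' held_s' [<-]. Qed.

Lemma DA_None_exhausted t : DA t = None -> size (L t) <= da_ptr t.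
Proof.
rewrite /DA; case: pickP => // not_held _; rewrite leqNgt; apply/negP => lt_size.
have := congr1 (fun f => f t) da_ptr_fixed.
rewrite /= /da_step lt_size /=; have -> : [forall s, ~~ held da_ptr s t].
  by apply/forallP => s; rewrite not_held.
by move/esym/n_Sn.
Qed.

Lemma DA_prefers_rejected t s : s \in L t ->
  prefers_to (lt_by (index^~ (L t))) s (DA t) -> index s (L t) < da_ptr t.
Proof.
move=> sL; case DA_t: (DA t) => [s'|] /= pref_s; last first.
  by apply: leq_trans (DA_None_exhausted DA_t); rewrite index_mem.
have := DA_held DA_t; rewrite heldE /applying => /and3P[/eqP/index_onth[s'L le_ptr] _ _].
apply: (leq_trans _ le_ptr); rewrite ltn_neqAle (lt_by_key_le pref_s) andbT.
apply: contraTneq pref_s => /(index_inj s sL s'L) ->.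
by have [irr _ _] := lt_by_strict_total (index^~ (L t)); rewrite irr.
Qed.

Lemma held_outranks_rejected s t t' : t \in P s -> index s (L t) < da_ptr t ->
  held da_ptr s t' -> index t' (P s) < index t (P s).
Proof.
move=> tP /(rejected_outranked tP) outranked; rewrite heldE => /and3P[_ _ lt_q].
rewrite ltnNge; apply: contraTN lt_q => le_tt'; rewrite -leqNgt.
apply: leq_trans outranked _; apply/subset_leq_card/subsetP => y.
by rewrite !inE => /and3P[-> -> ltyt] /=; apply: leq_trans le_tt'.
Qed.

End DeferredAcceptance.

Theorem mainTheorem2 (T S : finType) (q : S -> nat) (L : T -> seq S) (P : S -> seq T)
  (HLuniq : forall t, uniq (L t))
  (HPuniq : forall s, uniq (P s))
  (HPapp : forall s t, t \in P s -> s \in L t) :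
  non_wasteful q (DA q L P) ->
  exists (pref : T -> rel S) (prio : S -> rel T),
    [/\ (forall t, strict_total_order (pref t)) /\
          (forall s, strict_total_order (prio s)),
        forall t s s', s \in L t -> s' \in L t ->
          index s (L t) < index s' (L t) -> pref t s s',
        forall s t t', t \in P s -> t' \in P s ->
          index t (P s) < index t' (P s) -> prio s t t',
        forall s t t', t \in P s -> s \in L t' -> t' \notin P s -> prio s t t'
      & stable q pref prio (DA q L P)].
Proof.
(* HLuniq and HPuniq are not needed: index is injective on the members of any list. *)
move=> non_wasteful_DA.
exists (fun t => lt_by (index^~ (L t))), (fun s => lt_by (index^~ (P s))).
split.
- by split=> ?; apply: lt_by_strict_total.
- by move=> t s s' _ _; apply: lt_by_key.
- by move=> s t t' _ _; apply: lt_by_key.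
- by move=> s t t' tP _ t'NP; apply: lt_by_key; rewrite (memNindex t'NP) index_mem.
move=> t s; split.
  case=> unmatched_t; case: non_wasteful_DA => [-> | /(_ t)//]; by rewrite ltnn.
case=> pref_s [t' /[!inE] /eqP/DA_held held_t' prio_tt'].
have t'P : t' \in P s by case/and3P: held_t'.
have tP : t \in P s.
  apply: contraTT prio_tt' => tNP; apply/negP => /lt_by_key_le.
  by rewrite (memNindex tNP) leqNgt index_mem t'P.
have rejected := DA_prefers_rejected (HPapp _ _ tP) pref_s.
have := lt_by_key_le prio_tt'; rewrite leqNgt.
by rewrite (held_outranks_rejected tP rejected held_t').
Qed.
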